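(* Let $\mathcal D=(A,D)$ be a dependence alphabet and suppose there are distinct letters $a,b\in A$ with $(a,b)\in D$. Let $\mathcal R\subseteq\mathbb M(\mathcal D)^2$ be a rational trace relation. Then there exist lc-rational trace relations $\mathcal R_1,\mathcal R_2$ such that $\mathcal R=\mathcal R_1^{-1}\circ\mathcal R_2$.
   Context: A dependence alphabet is $\mathcal D=(A,D)$, $A$ finite, $D\subseteq A\times A$ reflexive and symmetric; $x,y$ independent if $(x,y)\notin D$. $\sim$ is the least congruence on $A^*$ with $xy\sim yx$ for independent $x,y$; $\mathbb M(\mathcal D)=A^*/{\sim}$, $[w]$ the class of $w$, $[R]=\{([u],[v])\mid(u,v)\in R\}$. A trace relation is rational if it equals $[R]$ for a rational word relation $R$ (one accepted by a finite transducer). A word relation $R$ is left-closed if $u\sim u'$, $(u',v')\in R$ imply some $v$ with $(u,v)\in R$, $v\sim v'$; a trace relation is lc-rational if it equals $[R]$ for a left-closed rational word relation $R$. $\mathcal R^{-1}=\{(y,x)\mid(x,y)\in\mathcal R\}$ and $\mathcal R_1\circ\mathcal R_2=\{(x,z)\mid\exists y:(x,y)\in\mathcal R_1,(y,z)\in\mathcal R_2\}$. *)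

From mathcomp Require Import all_boot.
Set Implicit Arguments. Unset Strict Implicit. Unset Printing Implicit Defensive.

Section Traces.
Variables (A : finType) (D : rel A).

(* x, y independent iff ~~ D x y.  trace_eq is the least congruence on A^*
   containing xy ~ yx for independent x, y: the equivalence closure of
   swapping two adjacent independent letters inside an arbitrary context. *)
Inductive trace_eq : seq A -> seq A -> Prop :=
| te_refl u : trace_eq u u
| te_swap u v x y : ~~ D x y -> trace_eq (u ++ x :: y :: v) (u ++ y :: x :: v)
| te_sym u v : trace_eq u v -> trace_eq v u
| te_trans u v w : trace_eq u v -> trace_eq v w -> trace_eq u w.

Definition trace := {P : seq A -> Prop | exists w, P = trace_eq w}.
Definition cls (w : seq A) : trace := exist _ (trace_eq w) (ex_intro _ w erefl).

Definition word_rel := seq A -> seq A -> Prop.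
Definition trace_rel := trace -> trace -> Prop.

Definition lift (R : word_rel) : trace_rel :=
  fun x y => exists u v, R u v /\ x = cls u /\ y = cls v.

Record transducer := Transducer {
  tr_state : finType;
  tr_init : pred tr_state;
  tr_final : pred tr_state;
  tr_trans : seq (tr_state * seq A * seq A * tr_state) }.

Inductive tr_run (T : transducer) : tr_state T -> tr_state T -> seq A -> seq A -> Prop :=
| run_nil q : tr_run q q [::] [::]
| run_cons q q' r u1 v1 u v :
    (q, u1, v1, q') \in tr_trans T -> tr_run q' r u v ->
    tr_run q r (u1 ++ u) (v1 ++ v).

Definition tr_accepts (T : transducer) : word_rel :=
  fun u v => exists q r, [/\ @tr_init T q, @tr_final T r & @tr_run T q r u v].

Definition rational_wrel (R : word_rel) : Prop :=
  exists T : transducer, forall u v, R u v <-> tr_accepts T u v.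

Definition left_closed (R : word_rel) : Prop :=
  forall u u' v', trace_eq u u' -> R u' v' -> exists v, R u v /\ trace_eq v v'.

Definition same_trel (R S : trace_rel) : Prop := forall x y, R x y <-> S x y.

Definition rational_trel (R : trace_rel) : Prop :=
  exists W, rational_wrel W /\ same_trel R (lift W).

Definition lc_rational_trel (R : trace_rel) : Prop :=
  exists W, rational_wrel W /\ left_closed W /\ same_trel R (lift W).

Definition trel_inv (R : trace_rel) : trace_rel := fun y x => R x y.
Definition trel_comp (R1 R2 : trace_rel) : trace_rel :=
  fun x z => exists y, R1 x y /\ R2 y z.

End Traces.

From Pilot Require Import Defs.
From mathcomp Require Import all_boot.
Set Implicit Arguments. Unset Strict Implicit. Unset Printing Implicit Defensive.

(* Let a transducer T with transitions t_0, ..., t_(n-1) accept W, where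
   R = [W].  Encode t_i by the word a^i b, and let W1 (resp. W2) be accepted
   by the transducer that reads the code of a run of T and writes the input
   (resp. output) labels of that run; then W = W1^-1 o W2.  Since a and b
   are dependent, a word over {a, b} is alone in its trace class, so W1 and
   W2 are left-closed and lifting to traces commutes with composing through
   the codes: R = [W1]^-1 o [W2]. *)

Definition ab_code (A : Type) (a b : A) (i : nat) : seq A := nseq i a ++ [:: b].

Section ABCode.
Variables (A : eqType) (a b : A).

Lemma ab_code_cat_inj i j x y : a != b ->
  ab_code a b i ++ x = ab_code a b j ++ y -> i = j /\ x = y.
Proof.
move=> neq_ab; elim: i j => [|i IHi] [|j] /=.
- by case=> ->.
- by case=> eq_ba; rewrite eq_ba eqxx in neq_ab.
- by case=> eq_ab; rewrite eq_ab eqxx in neq_ab.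
- by case=> /IHi [-> ->].
Qed.

Lemma ab_code_cat_neq0 i x : ab_code a b i ++ x <> [::].
Proof. by case: i. Qed.

Lemma all_ab_code i : all (pred2 a b) (ab_code a b i).
Proof. by rewrite all_cat all_nseq /= !eqxx !orbT. Qed.

End ABCode.

Section Cliques.
Variables (A : finType) (D : rel A).

Lemma cls_trace_eq u v : cls D u = cls D v -> trace_eq D u v.
Proof. by move/(f_equal (fun t : trace D => sval t v)) => /= ->; apply: te_refl. Qed.

Lemma lift_ext (W W' : word_rel A) :
  (forall u v, W u v <-> W' u v) -> same_trel (@Defs.lift A D W) (@Defs.lift A D W').
Proof.
by move=> eqW x y; split=> -[u [v [/eqW Wuv def_xy]]]; exists u, v.
Qed.

Variable S : pred A.
Hypothesis cliqueS : {in S &, forall x y, D x y}.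

Lemma trace_eq_clique u v : trace_eq D u v -> all S u || all S v -> u = v.
Proof.
elim=> {u v} //.
- move=> u v x y indep_xy; rewrite !all_cat /=.
  by case/orP=> /andP[_ /and3P[Sx Sy _]]; rewrite cliqueS in indep_xy.
- by move=> u v _ IHuv; rewrite orbC => /IHuv ->.
- move=> u v w _ IHuv _ IHvw /orP[Su | Sw].
    have eq_uv : u = v by rewrite IHuv ?Su.
    by rewrite eq_uv IHvw // -eq_uv Su.
  have eq_vw : v = w by rewrite IHvw ?Sw ?orbT.
  by rewrite -eq_vw IHuv // eq_vw Sw orbT.
Qed.

Lemma left_closed_clique (W : word_rel A) :
  (forall u v, W u v -> all S u) -> left_closed D W.
Proof.
move=> SW u u' v' eq_uu' Wu'v'.
rewrite (trace_eq_clique eq_uu') ?(SW _ _ Wu'v') ?orbT //.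
by exists v'; split; last apply: te_refl.
Qed.

Lemma lift_comp_clique (W1 W2 : word_rel A) : (forall c u, W1 c u -> all S c) ->
  same_trel (@Defs.lift A D (fun u v => exists c, W1 c u /\ W2 c v))
            (trel_comp (trel_inv (@Defs.lift A D W1)) (@Defs.lift A D W2)).
Proof.
move=> SW1 x z; split.
  case=> u [v [[c [W1cu W2cv]] [-> ->]]].
  by exists (cls D c); split; [exists c, u | exists c, v].
case=> y [[c1 [u [W1c1u [-> ->]]]] [c2 [v [W2c2v [eq_c12 ->]]]]].
have eq_c : c1 = c2.
  by apply: trace_eq_clique (cls_trace_eq eq_c12) _; rewrite (SW1 _ _ W1c1u).
by subst c2; exists u, v; split; first exists c1.
Qed.

Lemma lc_rational_clique (T : transducer A) :
  (forall u v, tr_accepts T u v -> all S u) ->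
  lc_rational_trel (@Defs.lift A D (tr_accepts T)).
Proof.
move=> ST; exists (tr_accepts T); split; first by exists T.
by split=> //; apply: left_closed_clique ST.
Qed.

End Cliques.

Section Recode.
Variables (A : finType) (a b : A) (T : transducer A).

Definition transition := (tr_state T * seq A * seq A * tr_state T)%type.
Definition in_label (t : transition) := t.1.1.2.
Definition out_label (t : transition) := t.1.2.

Definition recode (label : transition -> seq A) : transducer A :=
  @Transducer A _ (@tr_init A T) (@tr_final A T)
    [seq (t.1.1.1, ab_code a b (index t (tr_trans T)), label t, t.2) | t <- tr_trans T].

Lemma recode_transP label q c w q' : (q, c, w, q') \in tr_trans (recode label) ->
  exists2 t, t \in tr_trans T &
    [/\ q = t.1.1.1, c = ab_code a b (index t (tr_trans T)), w = label t & q' = t.2].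
Proof. by case/mapP=> t Tt [-> -> -> ->]; exists t. Qed.

Lemma recode_run_ab label q r c w : @tr_run A (recode label) q r c w -> all (pred2 a b) c.
Proof.
elim=> // {}q q' {}r c1 w1 {}c {}w /recode_transP[t _ [_ -> _ _]] _ IHc.
by rewrite all_cat all_ab_code.
Qed.

Lemma recode_accepts_ab label c w : tr_accepts (recode label) c w -> all (pred2 a b) c.
Proof. by case=> q [r [_ _ /recode_run_ab]]. Qed.

Lemma recode_run_nil label q r w : @tr_run A (recode label) q r [::] w -> q = r /\ w = [::].
Proof.
move def_c: [::] => c run_c; case: run_c def_c => // {}q q' {}r c1 w1 {}c {}w.
by case/recode_transP=> t _ [_ -> _ _] _ /esym/ab_code_cat_neq0.
Qed.

Lemma run_recode q r u v : @tr_run A T q r u v -> exists c,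
  @tr_run A (recode in_label) q r c u /\ @tr_run A (recode out_label) q r c v.
Proof.
elim=> [p | p p' {}r u1 v1 {}u {}v Tt _ [c [run_u run_v]]].
  by exists [::]; split; apply: run_nil.
exists (ab_code a b (index (p, u1, v1, p') (tr_trans T)) ++ c).
by split; [apply: run_cons _ run_u | apply: run_cons _ run_v]; exact: (map_f _ Tt).
Qed.

Hypothesis neq_ab : a != b.

(* Codes a^i b are uniquely decodable, so both runs follow the same
   transitions of T. *)
Lemma recode_run_merge q1 r1 q2 r2 c x z :
  @tr_run A (recode in_label) q1 r1 c x -> @tr_run A (recode out_label) q2 r2 c z ->
  @tr_run A T q1 r1 x z.
Proof.
move=> run_x; elim: run_x q2 r2 z => [p | p p' {}r1 c1 x1 {}c {}x Tt _ IHc] q2 r2 z run_z.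
  by case/recode_run_nil: run_z => _ ->; apply: run_nil.
move: run_z; move def_c: (c1 ++ c) => c'' run_z.
case: run_z def_c => [p2 | ? p2' ? c2 z2 c' z' Tt' run_z'].
  by have [t _ [_ -> _ _]] := recode_transP Tt; move/ab_code_cat_neq0.
have [t Tt_in [-> -> -> def_p']] := recode_transP Tt.
have [t' Tt'_in [_ -> -> def_p2']] := recode_transP Tt'.
case/ab_code_cat_inj=> // eq_index eq_c; subst c' p' p2'.
have eq_t : t' = t by rewrite -(nth_index t Tt_in) -(nth_index t Tt'_in) eq_index.
subst t'; apply: run_cons (IHc _ _ _ run_z').
by rewrite -!surjective_pairing.
Qed.

Lemma tr_accepts_recode u v : tr_accepts T u v <->
  exists c, tr_accepts (recode in_label) c u /\ tr_accepts (recode out_label) c v.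
Proof.
split.
  case=> q [r [init_q final_r /run_recode[c [run_u run_v]]]].
  by exists c; split; exists q, r.
case=> c [[q1 [r1 [init_q1 final_r1 run_u]]] [q2 [r2 [_ _ run_v]]]].
by exists q1, r1; split=> //; apply: recode_run_merge run_u run_v.
Qed.

End Recode.

Theorem proposition4p11 (A : finType) (D : rel A)
  (Drefl : reflexive D) (Dsym : symmetric D)
  (Hab : exists a b : A, a != b /\ D a b)
  (R : trace_rel D) (HR : rational_trel R) :
  exists R1 R2 : trace_rel D,
    [/\ lc_rational_trel R1, lc_rational_trel R2 &
        same_trel R (trel_comp (trel_inv R1) R2)].
Proof.
case: Hab => a [b [neq_ab Dab]]; case: HR => W [[T acceptsW] def_R].
have clique_ab : {in pred2 a b &, forall x y, D x y}.
  by move=> x y /pred2P[] -> /pred2P[] ->; rewrite ?Drefl // Dsym.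
have ab_input label := @recode_accepts_ab _ a b T label.
exists (@Defs.lift A D (tr_accepts (recode a b (@in_label A T)))),
       (@Defs.lift A D (tr_accepts (recode a b (@out_label A T)))).
split; [exact: (lc_rational_clique clique_ab (ab_input _)) .. | move=> x z].
apply: iff_trans (def_R x z) _.
apply: iff_trans _ (lift_comp_clique clique_ab _ (ab_input _) x z).
apply: lift_ext => u v; apply: iff_trans (acceptsW u v) _.
exact: tr_accepts_recode.
Qed.
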